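(* Let $A$ and $B$ be Hermitian (bounded) operators on a finite-dimensional Hilbert space, and let $\gamma:[0,\infty)\to\mathbb{R}$ be a non-decreasing continuous function such that $\|e^{-iAt}-e^{-iBt}\|_2\le t\,\gamma(t)$ for all $t\ge 0$. Then $\|A-B\|_2\le\gamma(t)$ for every $t\ge 0$.
   Context: $\|\cdot\|_2$ denotes the operator (spectral) norm. *)

From Stdlib Require Import Reals Lra Lia Arith Factorial.
Open Scope R_scope.

(* Complex numbers z = (Re z, Im z). *)
Definition Cpx : Type := (R * R)%type.
Definition Cadd (z w : Cpx) : Cpx := (fst z + fst w, snd z + snd w).
Definition Copp (z : Cpx) : Cpx := (- fst z, - snd z).
Definition Cmul (z w : Cpx) : Cpx :=
  (fst z * fst w - snd z * snd w, fst z * snd w + snd z * fst w).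
Definition Cconj (z : Cpx) : Cpx := (fst z, - snd z).
Definition Cscale (a : R) (z : Cpx) : Cpx := (a * fst z, a * snd z).
Definition Cabs2 (z : Cpx) : R := fst z * fst z + snd z * snd z.

Fixpoint rsum (n : nat) (f : nat -> R) : R :=
  match n with O => 0 | S k => rsum k f + f k end.
Fixpoint csum (n : nat) (f : nat -> Cpx) : Cpx :=
  match n with O => (0, 0) | S k => Cadd (csum k f) (f k) end.

(* n x n complex matrices (operators on C^n), entries indexed by i,j < n;
   vectors in C^n, entries indexed by i < n. Values outside the range are
   irrelevant. *)
Definition Mat : Type := nat -> nat -> Cpx.
Definition Vec : Type := nat -> Cpx.

Definition hermitian (n : nat) (A : Mat) : Prop :=
  forall i j, (i < n)%nat -> (j < n)%nat -> A i j = Cconj (A j i).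

Definition mmul (n : nat) (A B : Mat) : Mat :=
  fun i j => csum n (fun k => Cmul (A i k) (B k j)).
Definition mid : Mat := fun i j => if Nat.eqb i j then (1, 0) else (0, 0).
Fixpoint mpow (n : nat) (A : Mat) (k : nat) : Mat :=
  match k with O => mid | S k' => mmul n (mpow n A k') A end.
Definition msub (A B : Mat) : Mat := fun i j => Cadd (A i j) (Copp (B i j)).
Definition mscal (c : Cpx) (A : Mat) : Mat := fun i j => Cmul c (A i j).

Definition expm_partial (n : nat) (M : Mat) (N : nat) : Mat :=
  fun i j => csum (S N) (fun k => Cscale (/ INR (fact k)) (mpow n M k i j)).

Definition is_expm (n : nat) (M E : Mat) : Prop :=
  forall i j, (i < n)%nat -> (j < n)%nat ->
    Un_cv (fun N => fst (expm_partial n M N i j)) (fst (E i j)) /\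
    Un_cv (fun N => snd (expm_partial n M N i j)) (snd (E i j)).

Definition mvapply (n : nat) (M : Mat) (v : Vec) : Vec :=
  fun i => csum n (fun j => Cmul (M i j) (v j)).
Definition vnorm (n : nat) (v : Vec) : R := sqrt (rsum n (fun i => Cabs2 (v i))).

Definition is_opnorm (n : nat) (M : Mat) (r : R) : Prop :=
  is_lub (fun x => exists v : Vec, vnorm n v <= 1 /\ x = vnorm n (mvapply n M v)) r.

Definition continuous_on_nonneg (g : R -> R) : Prop :=
  forall t, 0 <= t -> forall eps, 0 < eps -> exists delta, 0 < delta /\
    forall s, 0 <= s -> Rabs (s - t) < delta -> Rabs (g s - g t) < eps.

Definition nondecreasing_on_nonneg (g : R -> R) : Prop :=
  forall s t, 0 <= s -> s <= t -> g s <= g t.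

From Stdlib Require Import Reals Lra Lia Psatz Factorial ClassicalEpsilon.
Open Scope R_scope.

(* For small s, exp(-isA) - exp(-isB) = -is(A - B) + O(s^2) entrywise, so for every unit vector v
   s ||(A - B) v|| <= ||(exp(-isA) - exp(-isB)) v|| + O(s^2) <= s gamma(s) + O(s^2).
   Dividing by s and letting s -> 0 gives ||(A - B) v|| <= gamma(0) by continuity, and
   gamma(0) <= gamma(t) by monotonicity.  The comparison is made on squared norms through
   |z|^2 <= (1 + s) |z + y|^2 + (1 + 1/s) |y|^2, which avoids the triangle inequality in C^n. *)

Definition Cnorm1 (z : Cpx) : R := Rabs (fst z) + Rabs (snd z).

Lemma Cnorm1_ge0 z : 0 <= Cnorm1 z.
Proof. unfold Cnorm1. pose proof (Rabs_pos (fst z)); pose proof (Rabs_pos (snd z)); lra. Qed.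

Lemma Rabs_fst_le_Cnorm1 z : Rabs (fst z) <= Cnorm1 z.
Proof. unfold Cnorm1. pose proof (Rabs_pos (snd z)); lra. Qed.

Lemma Rabs_snd_le_Cnorm1 z : Rabs (snd z) <= Cnorm1 z.
Proof. unfold Cnorm1. pose proof (Rabs_pos (fst z)); lra. Qed.

Lemma Cnorm1_add z w : Cnorm1 (Cadd z w) <= Cnorm1 z + Cnorm1 w.
Proof.
  unfold Cnorm1, Cadd; simpl.
  pose proof (Rabs_triang (fst z) (fst w)); pose proof (Rabs_triang (snd z) (snd w)); lra.
Qed.

Lemma Cnorm1_opp z : Cnorm1 (Copp z) = Cnorm1 z.
Proof. unfold Cnorm1, Copp; simpl. rewrite !Rabs_Ropp. reflexivity. Qed.

Lemma Cnorm1_mul z w : Cnorm1 (Cmul z w) <= Cnorm1 z * Cnorm1 w.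
Proof.
  destruct z as [a b], w as [c d]; unfold Cnorm1, Cmul; simpl.
  pose proof (Rabs_triang (a * c) (- (b * d))); pose proof (Rabs_triang (a * d) (b * c)).
  rewrite Rabs_Ropp, !Rabs_mult in *.
  pose proof (Rabs_pos a); pose proof (Rabs_pos b); pose proof (Rabs_pos c); pose proof (Rabs_pos d).
  unfold Rminus. nra.
Qed.

Lemma Cabs2_ge0 z : 0 <= Cabs2 z.
Proof. unfold Cabs2. nra. Qed.

Lemma Cabs2_le_Cnorm1_sq z : Cabs2 z <= Cnorm1 z ^ 2.
Proof.
  unfold Cabs2, Cnorm1.
  pose proof (pow2_abs (fst z)); pose proof (pow2_abs (snd z)).
  pose proof (Rabs_pos (fst z)); pose proof (Rabs_pos (snd z)); nra.
Qed.

Lemma Cnorm1_le_2_of_Cabs2_le_1 z : Cabs2 z <= 1 -> Cnorm1 z <= 2.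
Proof.
  unfold Cabs2, Cnorm1; intros Hz.
  assert (Rabs (fst z) <= 1) by (apply Rabs_le; nra).
  assert (Rabs (snd z) <= 1) by (apply Rabs_le; nra).
  lra.
Qed.

Lemma Cabs2_mul z w : Cabs2 (Cmul z w) = Cabs2 z * Cabs2 w.
Proof. unfold Cabs2, Cmul; simpl. ring. Qed.

Lemma rsum_ext n f g : (forall k, (k < n)%nat -> f k = g k) -> rsum n f = rsum n g.
Proof.
  induction n as [|n IH]; simpl; intros H; auto.
  rewrite IH by (intros; apply H; lia). rewrite H by lia. reflexivity.
Qed.

Lemma rsum_le n f g : (forall k, (k < n)%nat -> f k <= g k) -> rsum n f <= rsum n g.
Proof.
  induction n as [|n IH]; simpl; intros H; [lra|].
  pose proof (IH (fun k Hk => H k ltac:(lia))). pose proof (H n ltac:(lia)). lra.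
Qed.

Lemma rsum_add n f g : rsum n (fun k => f k + g k) = rsum n f + rsum n g.
Proof. induction n as [|n IH]; simpl; [lra|]. rewrite IH. ring. Qed.

Lemma rsum_scal n c f : rsum n (fun k => c * f k) = c * rsum n f.
Proof. induction n as [|n IH]; simpl; [lra|]. rewrite IH. ring. Qed.

Lemma rsum_const n c : rsum n (fun _ => c) = INR n * c.
Proof. induction n as [|n IH]; simpl rsum; [simpl; lra|]. rewrite IH, S_INR. ring. Qed.

Lemma rsum_ge0 n f : (forall k, (k < n)%nat -> 0 <= f k) -> 0 <= rsum n f.
Proof. intros H. rewrite <- (Rmult_0_r (INR n)), <- rsum_const. apply rsum_le, H. Qed.

Lemma rsum_term_le n f i : (forall k, (k < n)%nat -> 0 <= f k) -> (i < n)%nat -> f i <= rsum n f.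
Proof.
  induction n as [|n IH]; intros H Hi; [lia|]. simpl.
  pose proof (rsum_ge0 n f (fun k Hk => H k ltac:(lia))).
  destruct (Nat.eq_dec i n) as [->|Hne]; [lra|].
  pose proof (IH (fun k Hk => H k ltac:(lia)) ltac:(lia)). pose proof (H n ltac:(lia)). lra.
Qed.

Lemma rsum_sum_f_R0 N f : rsum (S N) f = sum_f_R0 f N.
Proof. induction N as [|N IH]; simpl in *; [lra|]. rewrite IH. reflexivity. Qed.

Lemma fst_csum n f : fst (csum n f) = rsum n (fun k => fst (f k)).
Proof. induction n as [|n IH]; simpl; auto. rewrite IH. reflexivity. Qed.

Lemma snd_csum n f : snd (csum n f) = rsum n (fun k => snd (f k)).
Proof. induction n as [|n IH]; simpl; auto. rewrite IH. reflexivity. Qed.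

Lemma Cnorm1_csum n f : Cnorm1 (csum n f) <= rsum n (fun k => Cnorm1 (f k)).
Proof.
  induction n as [|n IH]; simpl.
  - unfold Cnorm1; simpl. rewrite Rabs_R0. lra.
  - pose proof (Cnorm1_add (csum n f) (f n)). lra.
Qed.
Lemma rsum_delta n i g :
  rsum n (fun k => if Nat.eqb i k then g k else 0) = if Nat.ltb i n then g i else 0.
Proof.
  induction n as [|n IH]; simpl.
  - destruct (Nat.ltb_spec i 0); [lia | reflexivity].
  - rewrite IH. destruct (Nat.eqb_spec i n) as [->|Hne].
    + destruct (Nat.ltb_spec n n), (Nat.ltb_spec n (S n)); try lia; lra.
    + destruct (Nat.ltb_spec i n), (Nat.ltb_spec i (S n)); try lia; lra.
Qed.

Lemma mmul_mid_l n M i j : (i < n)%nat -> mmul n mid M i j = M i j.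
Proof.
  intros Hi. unfold mmul, mid.
  assert (Hlt : Nat.ltb i n = true) by (apply Nat.ltb_lt; exact Hi).
  apply injective_projections; [rewrite fst_csum | rewrite snd_csum].
  - rewrite (rsum_ext n _ (fun k => if Nat.eqb i k then fst (M k j) else 0)), rsum_delta, Hlt;
      [reflexivity | intros k _; destruct (Nat.eqb i k); simpl; ring].
  - rewrite (rsum_ext n _ (fun k => if Nat.eqb i k then snd (M k j) else 0)), rsum_delta, Hlt;
      [reflexivity | intros k _; destruct (Nat.eqb i k); simpl; ring].
Qed.

Lemma Cnorm1_mid i j : Cnorm1 (mid i j) <= 1.
Proof. unfold mid, Cnorm1. destruct (Nat.eqb i j); simpl; rewrite ?Rabs_R0, ?Rabs_R1; lra. Qed.

Lemma mat_entry_bound n (M : Mat) :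
  exists m, 0 <= m /\ forall i j, (i < n)%nat -> (j < n)%nat -> Cnorm1 (M i j) <= m.
Proof.
  exists (rsum n (fun i => rsum n (fun j => Cnorm1 (M i j)))). split.
  - apply rsum_ge0; intros; apply rsum_ge0; intros; apply Cnorm1_ge0.
  - intros i j Hi Hj.
    apply Rle_trans with (rsum n (fun j => Cnorm1 (M i j))).
    + apply (rsum_term_le n (fun j => Cnorm1 (M i j))); auto using Cnorm1_ge0.
    + apply (rsum_term_le n (fun i => rsum n (fun j => Cnorm1 (M i j)))); auto.
      intros; apply rsum_ge0; intros; apply Cnorm1_ge0.
Qed.

Lemma mpow_Cnorm1_le n M m k i j : 0 <= m ->
  (forall i j, (i < n)%nat -> (j < n)%nat -> Cnorm1 (M i j) <= m) ->
  (i < n)%nat -> (j < n)%nat -> Cnorm1 (mpow n M k i j) <= (INR n * m) ^ k.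
Proof.
  intros Hm HM. revert i j. induction k as [|k IH]; intros i j Hi Hj.
  - apply Cnorm1_mid.
  - simpl mpow. unfold mmul. eapply Rle_trans; [apply Cnorm1_csum|].
    apply Rle_trans with (rsum n (fun _ => (INR n * m) ^ k * m)).
    + apply rsum_le; intros l Hl. eapply Rle_trans; [apply Cnorm1_mul|].
      apply Rmult_le_compat; auto using Cnorm1_ge0.
    + rewrite rsum_const. simpl. lra.
Qed.

Definition madd (P Q : Mat) : Mat := fun i j => Cadd (P i j) (Q i j).

Definition vnorm2 (n : nat) (v : Vec) : R := rsum n (fun i => Cabs2 (v i)).

Lemma vnorm2_ge0 n v : 0 <= vnorm2 n v.
Proof. apply rsum_ge0; intros; apply Cabs2_ge0. Qed.

Lemma vnorm_sq n v : vnorm n v ^ 2 = vnorm2 n v.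
Proof. apply pow2_sqrt, vnorm2_ge0. Qed.

Lemma vnorm_le_1_Cnorm1 n v j : vnorm n v <= 1 -> (j < n)%nat -> Cnorm1 (v j) <= 2.
Proof.
  intros Hv Hj. apply Cnorm1_le_2_of_Cabs2_le_1.
  assert (Hv2 : vnorm2 n v <= 1).
  { rewrite <- vnorm_sq. assert (0 <= vnorm n v) by apply sqrt_pos. nra. }
  pose proof (rsum_term_le n (fun i => Cabs2 (v i)) j (fun k _ => Cabs2_ge0 (v k)) Hj).
  unfold vnorm2 in Hv2. lra.
Qed.

Lemma vnorm2_mvapply_le n M d v :
  (forall i j, (i < n)%nat -> (j < n)%nat -> Cnorm1 (M i j) <= d) -> vnorm n v <= 1 ->
  vnorm2 n (mvapply n M v) <= INR n * (2 * INR n * d) ^ 2.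
Proof.
  intros HM Hv. unfold vnorm2. rewrite <- rsum_const. apply rsum_le; intros i Hi.
  assert (Hi_le : Cnorm1 (mvapply n M v i) <= 2 * INR n * d).
  { unfold mvapply. eapply Rle_trans; [apply Cnorm1_csum|].
    replace (2 * INR n * d) with (INR n * (d * 2)) by ring. rewrite <- rsum_const.
    apply rsum_le; intros k Hk. eapply Rle_trans; [apply Cnorm1_mul|].
    apply Rmult_le_compat; auto using Cnorm1_ge0. apply (vnorm_le_1_Cnorm1 n); assumption. }
  eapply Rle_trans; [apply Cabs2_le_Cnorm1_sq|].
  pose proof (Cnorm1_ge0 (mvapply n M v i)). nra.
Qed.

Lemma opnorm_exists n M : exists r, is_opnorm n M r.
Proof.
  destruct (mat_entry_bound n M) as [d [_ HM]].
  destruct (completeness (fun x => exists v : Vec, vnorm n v <= 1 /\ x = vnorm n (mvapply n M v)))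
    as [r Hr].
  - exists (sqrt (INR n * (2 * INR n * d) ^ 2)). intros x [v [Hv ->]].
    apply sqrt_le_1_alt, vnorm2_mvapply_le; assumption.
  - exists (vnorm n (mvapply n M (fun _ => (0, 0)))), (fun _ => (0, 0)). split; [|reflexivity].
    unfold vnorm. rewrite (rsum_ext n _ (fun _ => 0)), rsum_const, Rmult_0_r, sqrt_0.
    + lra.
    + intros; unfold Cabs2; simpl; ring.
  - exists r. exact Hr.
Qed.

Lemma csum_ext n f g : (forall k, (k < n)%nat -> f k = g k) -> csum n f = csum n g.
Proof.
  induction n as [|n IH]; simpl; intros H; auto.
  rewrite IH by (intros; apply H; lia). rewrite H by lia. reflexivity.
Qed.

Lemma mvapply_ext n P Q v i :
  (forall j, (j < n)%nat -> P i j = Q i j) -> mvapply n P v i = mvapply n Q v i.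
Proof. intros H. apply csum_ext. intros j Hj. rewrite H by exact Hj. reflexivity. Qed.

Lemma rsum_lin n a b f g : rsum n (fun k => a * f k + b * g k) = a * rsum n f + b * rsum n g.
Proof. rewrite rsum_add, !rsum_scal. reflexivity. Qed.

Lemma mvapply_madd n P Q v i :
  mvapply n (madd P Q) v i = Cadd (mvapply n P v i) (mvapply n Q v i).
Proof.
  unfold mvapply, madd. apply injective_projections; simpl;
    [rewrite !fst_csum | rewrite !snd_csum]; rewrite <- rsum_add; apply rsum_ext;
    intros k _; destruct (P i k), (Q i k), (v k); simpl; ring.
Qed.

Lemma mvapply_mscal n c M v i : mvapply n (mscal c M) v i = Cmul c (mvapply n M v i).
Proof.
  unfold mvapply, mscal. destruct c as [a b].
  apply injective_projections; simpl; rewrite !fst_csum, !snd_csum.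
  - transitivity (rsum n (fun k => a * fst (Cmul (M i k) (v k)) + - b * snd (Cmul (M i k) (v k)))).
    + apply rsum_ext; intros k _; destruct (M i k), (v k); simpl; ring.
    + rewrite rsum_lin. ring.
  - transitivity (rsum n (fun k => a * snd (Cmul (M i k) (v k)) + b * fst (Cmul (M i k) (v k)))).
    + apply rsum_ext; intros k _; destruct (M i k), (v k); simpl; ring.
    + rewrite rsum_lin. ring.
Qed.

Lemma vnorm2_Cmul n c w : vnorm2 n (fun i => Cmul c (w i)) = Cabs2 c * vnorm2 n w.
Proof. unfold vnorm2. rewrite <- rsum_scal. apply rsum_ext. intros; apply Cabs2_mul. Qed.

Lemma vnorm2_weighted n s z y : 0 <= s ->
  s * vnorm2 n z <= s * (1 + s) * vnorm2 n (fun i => Cadd (z i) (y i)) + (1 + s) * vnorm2 n y.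
Proof.
  intros Hs. unfold vnorm2. rewrite <- !rsum_scal, <- rsum_add. apply rsum_le. intros i _.
  destruct (z i) as [a b], (y i) as [c d]. unfold Cabs2, Cadd; simpl.
  (* the slack is |s (z + y) + y|^2 *)
  pose proof (pow2_ge_0 (s * (a + c) + c)). pose proof (pow2_ge_0 (s * (b + d) + d)). nra.
Qed.

Lemma Un_cv_ext u w l : (forall N, u N = w N) -> Un_cv u l -> Un_cv w l.
Proof. intros Huw Hu eps Heps. destruct (Hu eps Heps) as [N HN]. exists N. intros k Hk. rewrite <- Huw. auto. Qed.

Lemma Un_cv_dist_le u L c b : Un_cv u L -> (forall N, Rabs (u (S N) - c) <= b) -> Rabs (L - c) <= b.
Proof.
  intros Hu Hb. destruct (Rle_or_lt (Rabs (L - c)) b) as [H|H]; [exact H|exfalso].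
  destruct (Hu (Rabs (L - c) - b)) as [N HN]; [lra|].
  specialize (HN (S N) ltac:(lia)). specialize (Hb N). unfold Rdist in HN.
  pose proof (Rabs_triang (L - u (S N)) (u (S N) - c)).
  replace (L - u (S N) + (u (S N) - c)) with (L - c) in * by ring.
  rewrite Rabs_minus_sym in HN. lra.
Qed.

Lemma series_dominated_by_exp (a : nat -> R) x :
  (forall k, Rabs (a k) <= / INR (fact k) * x ^ k) -> {l | Un_cv (fun N => sum_f_R0 a N) l}.
Proof.
  intros Ha. apply cv_cauchy_2, cauchy_abs, cv_cauchy_1.
  apply (Rseries_CV_comp _ (fun k => / INR (fact k) * x ^ k)).
  - intros k. split; [apply Rabs_pos | apply Ha].
  - apply exist_exp.
Qed.

Lemma pow2_le_fact k : 2 ^ S k <= INR (fact (S (S k))).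
Proof.
  induction k as [|k IH]; [simpl; lra|].
  rewrite fact_simpl, mult_INR. change (2 ^ S (S k)) with (2 * 2 ^ S k).
  assert (2 <= INR (S (S (S k)))) by (rewrite !S_INR; pose proof (pos_INR k); lra).
  pose proof (pow_lt 2 (S k) ltac:(lra)). nra.
Qed.

(* The tail [sum_{k >= 2} x^k / k!] is at most [x^2 sum_{k >= 2} 2^(1-k) = x^2]. *)
Lemma sum_f_R0_sub_first_two_le (a : nat -> R) x : 0 <= x <= 1 ->
  (forall k, Rabs (a k) <= / INR (fact k) * x ^ k) ->
  forall N, Rabs (sum_f_R0 a (S N) - (a 0%nat + a 1%nat)) <= x ^ 2.
Proof.
  intros Hx Ha N.
  assert (Hx2 : 0 <= x ^ 2) by (apply pow_le; lra).
  enough (Rabs (sum_f_R0 a (S N) - (a 0%nat + a 1%nat)) <= x ^ 2 * (1 - / 2 ^ N)).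
  { pose proof (Rinv_0_lt_compat _ (pow_lt 2 N ltac:(lra))). nra. }
  induction N as [|N IH].
  - simpl. replace (a 0%nat + a 1%nat - (a 0%nat + a 1%nat)) with 0 by ring. rewrite Rabs_R0. lra.
  - change (sum_f_R0 a (S (S N))) with (sum_f_R0 a (S N) + a (S (S N))).
    replace (sum_f_R0 a (S N) + a (S (S N)) - (a 0%nat + a 1%nat))
      with ((sum_f_R0 a (S N) - (a 0%nat + a 1%nat)) + a (S (S N))) by ring.
    assert (Hpow : x ^ S (S N) <= x ^ 2).
    { replace (S (S N)) with (2 + N)%nat by lia. rewrite pow_add.
      pose proof (pow_incr x 1 N ltac:(lra)). rewrite pow1 in *. nra. }
    assert (Hterm : / INR (fact (S (S N))) * x ^ S (S N) <= x ^ 2 * / 2 ^ S N).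
    { rewrite Rmult_comm. apply Rmult_le_compat; auto using pow_le.
      - apply pow_le; lra.
      - left. apply Rinv_0_lt_compat, INR_fact_lt_0.
      - apply Rinv_le_contravar; [apply pow_lt; lra | apply pow2_le_fact]. }
    pose proof (Ha (S (S N))). pose proof (Rabs_triang (sum_f_R0 a (S N) - (a 0%nat + a 1%nat)) (a (S (S N)))).
    change (2 ^ S N) with (2 * 2 ^ N) in *. rewrite Rinv_mult in *. lra.
Qed.

Lemma series_sub_first_two_le (a : nat -> R) x L : 0 <= x <= 1 ->
  (forall k, Rabs (a k) <= / INR (fact k) * x ^ k) ->
  Un_cv (fun N => sum_f_R0 a N) L -> Rabs (L - (a 0%nat + a 1%nat)) <= x ^ 2.
Proof.
  intros Hx Ha HL. apply (Un_cv_dist_le _ _ _ _ HL). apply sum_f_R0_sub_first_two_le; assumption.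
Qed.

Lemma expm_partial_fst n M N i j :
  fst (expm_partial n M N i j) = sum_f_R0 (fun k => / INR (fact k) * fst (mpow n M k i j)) N.
Proof. unfold expm_partial. rewrite fst_csum, rsum_sum_f_R0. reflexivity. Qed.

Lemma expm_partial_snd n M N i j :
  snd (expm_partial n M N i j) = sum_f_R0 (fun k => / INR (fact k) * snd (mpow n M k i j)) N.
Proof. unfold expm_partial. rewrite snd_csum, rsum_sum_f_R0. reflexivity. Qed.

Lemma expm_coeff_bound n M m k i j : 0 <= m ->
  (forall i j, (i < n)%nat -> (j < n)%nat -> Cnorm1 (M i j) <= m) ->
  (i < n)%nat -> (j < n)%nat ->
  Rabs (/ INR (fact k) * fst (mpow n M k i j)) <= / INR (fact k) * (INR n * m) ^ k /\
  Rabs (/ INR (fact k) * snd (mpow n M k i j)) <= / INR (fact k) * (INR n * m) ^ k.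
Proof.
  intros Hm HM Hi Hj. pose proof (mpow_Cnorm1_le n M m k i j Hm HM Hi Hj).
  assert (Hc : 0 < / INR (fact k)) by apply Rinv_0_lt_compat, INR_fact_lt_0.
  rewrite !Rabs_mult, (Rabs_pos_eq (/ _)) by lra.
  pose proof (Rabs_fst_le_Cnorm1 (mpow n M k i j)); pose proof (Rabs_snd_le_Cnorm1 (mpow n M k i j)).
  split; apply Rmult_le_compat_l; lra.
Qed.

Lemma expm_exists n M : exists E, is_expm n M E.
Proof.
  destruct (mat_entry_bound n M) as [m [Hm HM]].
  assert (Hentry : forall i j, exists z : Cpx, (i < n)%nat -> (j < n)%nat ->
    Un_cv (fun N => fst (expm_partial n M N i j)) (fst z) /\
    Un_cv (fun N => snd (expm_partial n M N i j)) (snd z)).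
  { intros i j. destruct (Compare_dec.lt_dec i n) as [Hi|Hi]; [destruct (Compare_dec.lt_dec j n) as [Hj|Hj]|];
      [| exists (0, 0); intros; lia ..].
    destruct (series_dominated_by_exp (fun k => / INR (fact k) * fst (mpow n M k i j)) (INR n * m))
      as [l1 H1]; [intros k; apply (expm_coeff_bound n M m k i j); assumption|].
    destruct (series_dominated_by_exp (fun k => / INR (fact k) * snd (mpow n M k i j)) (INR n * m))
      as [l2 H2]; [intros k; apply (expm_coeff_bound n M m k i j); assumption|].
    exists (l1, l2). intros _ _. split.
    - apply (Un_cv_ext _ _ _ (fun N => eq_sym (expm_partial_fst n M N i j)) H1).
    - apply (Un_cv_ext _ _ _ (fun N => eq_sym (expm_partial_snd n M N i j)) H2). }
  exists (fun i j => proj1_sig (constructive_indefinite_description _ (Hentry i j))).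
  intros i j Hi Hj. destruct (constructive_indefinite_description _ (Hentry i j)) as [z Hz].
  exact (Hz Hi Hj).
Qed.

Lemma expm_sub_linear_le n M E m i j : 0 <= m -> INR n * m <= 1 ->
  (forall i j, (i < n)%nat -> (j < n)%nat -> Cnorm1 (M i j) <= m) -> is_expm n M E ->
  (i < n)%nat -> (j < n)%nat -> Cnorm1 (msub E (madd mid M) i j) <= 2 * (INR n * m) ^ 2.
Proof.
  intros Hm Hnm HM HE Hi Hj. destruct (HE i j Hi Hj) as [H1 H2].
  assert (Hx : 0 <= INR n * m <= 1) by (split; [apply Rmult_le_pos; auto using pos_INR | exact Hnm]).
  assert (Hfirst : forall proj : Cpx -> R,
    / INR (fact 0) * proj (mpow n M 0 i j) + / INR (fact 1) * proj (mpow n M 1 i j)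
    = proj (mid i j) + proj (M i j)).
  { intros proj. simpl mpow. rewrite mmul_mid_l by exact Hi. simpl. rewrite Rinv_1. ring. }
  assert (Hfst := series_sub_first_two_le (fun k => / INR (fact k) * fst (mpow n M k i j)) _ _ Hx
    (fun k => proj1 (expm_coeff_bound n M m k i j Hm HM Hi Hj))
    (Un_cv_ext _ _ _ (fun N => expm_partial_fst n M N i j) H1)).
  assert (Hsnd := series_sub_first_two_le (fun k => / INR (fact k) * snd (mpow n M k i j)) _ _ Hx
    (fun k => proj2 (expm_coeff_bound n M m k i j Hm HM Hi Hj))
    (Un_cv_ext _ _ _ (fun N => expm_partial_snd n M N i j) H2)).
  cbv beta in Hfst, Hsnd. rewrite Hfirst in Hfst, Hsnd.
  unfold Cnorm1, msub, madd, Cadd, Copp; simpl. unfold Rminus in *. lra.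
Qed.

Lemma mscal_Cnorm1_le c M m n :
  (forall i j, (i < n)%nat -> (j < n)%nat -> Cnorm1 (M i j) <= m) ->
  forall i j, (i < n)%nat -> (j < n)%nat -> Cnorm1 (mscal c M i j) <= Cnorm1 c * m.
Proof.
  intros HM i j Hi Hj. unfold mscal. eapply Rle_trans; [apply Cnorm1_mul|].
  apply Rmult_le_compat_l; auto using Cnorm1_ge0.
Qed.

Lemma Cnorm1_neg_i s : 0 <= s -> Cnorm1 (0, - s) = s.
Proof. intros Hs. unfold Cnorm1; simpl. rewrite Rabs_R0, Rabs_Ropp, Rabs_pos_eq by exact Hs. ring. Qed.

Section SmallTime.

Variables (n : nat) (A B : Mat) (gamma : R -> R) (m : R).
Hypothesis Hm : 0 <= m.
Hypothesis HAm : forall i j, (i < n)%nat -> (j < n)%nat -> Cnorm1 (A i j) <= m.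
Hypothesis HBm : forall i j, (i < n)%nat -> (j < n)%nat -> Cnorm1 (B i j) <= m.
Hypothesis hbound : forall t, 0 <= t ->
  forall E F : Mat,
    is_expm n (mscal (0, - t) A) E ->
    is_expm n (mscal (0, - t) B) F ->
    forall r, is_opnorm n (msub E F) r -> r <= t * gamma t.

Lemma expm_difference_remainder_le s E F : 0 <= s -> INR n * (s * m) <= 1 ->
  is_expm n (mscal (0, - s) A) E -> is_expm n (mscal (0, - s) B) F ->
  forall i j, (i < n)%nat -> (j < n)%nat ->
  Cnorm1 (msub (msub E F) (mscal (0, - s) (msub A B)) i j) <= 4 * (INR n * (s * m)) ^ 2.
Proof.
  intros Hs Hnsm HE HF i j Hi Hj.
  assert (HsA := mscal_Cnorm1_le (0, - s) A m n HAm). assert (HsB := mscal_Cnorm1_le (0, - s) B m n HBm).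
  rewrite Cnorm1_neg_i in HsA, HsB by exact Hs.
  assert (Hsm : 0 <= s * m) by (apply Rmult_le_pos; assumption).
  pose proof (expm_sub_linear_le n _ E (s * m) i j Hsm Hnsm HsA HE Hi Hj).
  pose proof (expm_sub_linear_le n _ F (s * m) i j Hsm Hnsm HsB HF Hi Hj).
  assert (Hsplit : msub (msub E F) (mscal (0, - s) (msub A B)) i j
    = Cadd (msub E (madd mid (mscal (0, - s) A)) i j)
           (Copp (msub F (madd mid (mscal (0, - s) B)) i j))).
  { unfold msub, madd, mscal, Cadd, Copp, Cmul; simpl. f_equal; ring. }
  rewrite Hsplit. eapply Rle_trans; [apply Cnorm1_add|]. rewrite Cnorm1_opp. lra.
Qed.

Definition remainder_const : R := INR n * (8 * INR n ^ 3 * m ^ 2) ^ 2.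

Lemma sq_norm_le_small_time v s : vnorm n v <= 1 -> 0 < s <= 1 -> INR n * (s * m) <= 1 ->
  0 <= gamma s /\
  vnorm2 n (mvapply n (msub A B) v) <= (1 + s) * gamma s ^ 2 + s * (2 * remainder_const).
Proof.
  intros Hv [Hs0 Hs1] Hnsm. set (c := (0, - s)).
  destruct (expm_exists n (mscal c A)) as [E HE]. destruct (expm_exists n (mscal c B)) as [F HF].
  destruct (opnorm_exists n (msub E F)) as [r Hr].
  set (D := msub A B). set (Y := msub (msub E F) (mscal c D)).
  assert (HEFv : vnorm n (mvapply n (msub E F) v) <= r) by (apply (proj1 Hr); exists v; auto).
  assert (Hr_le : r <= s * gamma s) by (apply (hbound s ltac:(lra) E F HE HF r Hr)).
  assert (HEF0 : 0 <= vnorm n (mvapply n (msub E F) v)) by apply sqrt_pos.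
  assert (Hgamma : 0 <= gamma s) by nra.
  split; [exact Hgamma|].
  assert (HEF2 : vnorm2 n (mvapply n (msub E F) v) <= (s * gamma s) ^ 2).
  { rewrite <- vnorm_sq. nra. }
  assert (HY2 : vnorm2 n (mvapply n Y v) <= s ^ 4 * remainder_const).
  { eapply Rle_trans.
    - apply (vnorm2_mvapply_le n Y (4 * (INR n * (s * m)) ^ 2) v); [|exact Hv].
      apply expm_difference_remainder_le; auto; lra.
    - right. unfold remainder_const. ring. }
  assert (Hdec : vnorm2 n (mvapply n (msub E F) v)
    = vnorm2 n (fun i => Cadd (Cmul c (mvapply n D v i)) (mvapply n Y v i))).
  { apply rsum_ext. intros i _. rewrite <- mvapply_mscal, <- mvapply_madd.
    f_equal. apply mvapply_ext. intros j _. unfold Y, madd, msub, Cadd, Copp.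
    destruct (mscal c D i j), (E i j), (F i j). simpl. f_equal; ring. }
  pose proof (vnorm2_weighted n s (fun i => Cmul c (mvapply n D v i)) (mvapply n Y v) ltac:(lra))
    as Hweighted.
  cbv beta in Hweighted. rewrite <- Hdec, vnorm2_Cmul in Hweighted.
  replace (Cabs2 c) with (s ^ 2) in Hweighted by (unfold c, Cabs2; simpl; ring).
  pose proof (vnorm2_ge0 n (mvapply n D v)). pose proof (pow2_ge_0 (gamma s)).
  assert (HC : 0 <= remainder_const)
    by (unfold remainder_const; apply Rmult_le_pos; [apply pos_INR | apply pow2_ge_0]).
  apply Rmult_le_reg_l with (s ^ 3); [apply pow_lt; lra|].
  assert (0 <= s ^ 4 * remainder_const) by (apply Rmult_le_pos; [apply pow_le; lra | exact HC]).
  nra.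
Qed.

End SmallTime.

Lemma Rmult_le_1_of_le_Rinv s a : 0 < a -> s <= / a -> s * a <= 1.
Proof. intros Ha Hs. apply (Rmult_le_compat_r a) in Hs; [|lra]. rewrite Rinv_l in Hs by lra. exact Hs. Qed.

Lemma small_time_estimate n A B gamma
  (hbound : forall t, 0 <= t ->
     forall E F : Mat,
       is_expm n (mscal (0, - t) A) E ->
       is_expm n (mscal (0, - t) B) F ->
       forall r, is_opnorm n (msub E F) r -> r <= t * gamma t)
  v : vnorm n v <= 1 ->
  exists K s0, 0 < s0 /\ forall s, 0 < s <= s0 ->
    0 <= gamma s /\ vnorm2 n (mvapply n (msub A B) v) <= (1 + s) * gamma s ^ 2 + s * K.
Proof.
  intros Hv.
  destruct (mat_entry_bound n A) as [mA [HmA HA]]. destruct (mat_entry_bound n B) as [mB [HmB HB]].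
  set (m := mA + mB).
  assert (Hnm : 0 <= INR n * m) by (apply Rmult_le_pos; [apply pos_INR | unfold m; lra]).
  exists (2 * remainder_const n m), (Rmin 1 (/ (INR n * m + 1))). split.
  - apply Rmin_glb_lt; [lra | apply Rinv_0_lt_compat; lra].
  - intros s [Hs0 Hs].
    assert (Hs1 : s <= 1) by (eapply Rle_trans; [exact Hs | apply Rmin_l]).
    assert (Hsnm : s * (INR n * m + 1) <= 1)
      by (apply Rmult_le_1_of_le_Rinv; [lra | eapply Rle_trans; [exact Hs | apply Rmin_r]]).
    apply (sq_norm_le_small_time n A B gamma m); try assumption; try lra.
    + unfold m; lra.
    + intros i j Hi Hj. pose proof (HA i j Hi Hj). unfold m; lra.
    + intros i j Hi Hj. pose proof (HB i j Hi Hj). unfold m; lra.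
Qed.

Lemma le_at_0_of_sq_le (g : R -> R) (x K s0 : R) : continuous_on_nonneg g -> 0 < s0 ->
  (forall s, 0 < s <= s0 -> 0 <= g s /\ x ^ 2 <= (1 + s) * g s ^ 2 + s * K) -> x <= g 0.
Proof.
  intros hcont Hs0 Hx. apply Rle_plus_epsilon. intros eps Heps.
  destruct (hcont 0 (Rle_refl 0) (eps / 2)) as [delta [Hdelta Hnear]]; [lra|].
  set (y := g 0 + eps / 2). set (L := 4 * (y ^ 2 + Rabs K + 1) / eps ^ 2).
  assert (HL : 0 < L).
  { unfold L. pose proof (pow2_ge_0 y). pose proof (Rabs_pos K).
    apply Rdiv_lt_0_compat; [lra | apply pow_lt; lra]. }
  set (s := Rmin (Rmin s0 (delta / 2)) (/ L)).
  assert (Hs : 0 < s) by (apply Rmin_glb_lt; [apply Rmin_glb_lt|apply Rinv_0_lt_compat]; lra).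
  assert (Hs_s0 : s <= s0) by (eapply Rle_trans; [apply Rmin_l | apply Rmin_l]).
  assert (Hs_delta : s <= delta / 2) by (eapply Rle_trans; [apply Rmin_l | apply Rmin_r]).
  assert (HsL : s * L <= 1) by (apply Rmult_le_1_of_le_Rinv; [exact HL | apply Rmin_r]).
  assert (Hs_eps : s * (4 * (y ^ 2 + Rabs K + 1)) <= eps ^ 2).
  { unfold L, Rdiv in HsL. pose proof (pow_lt eps 2 Heps).
    apply (Rmult_le_compat_r (eps ^ 2)) in HsL; [|lra].
    rewrite !Rmult_assoc, Rinv_l in HsL by lra. lra. }
  destruct (Hx s (conj Hs Hs_s0)) as [Hgs Hxs].
  assert (Hgy : g s <= y).
  { assert (Hclose := Hnear s ltac:(lra) ltac:(rewrite Rminus_0_r, Rabs_pos_eq; lra)).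
    apply Rabs_def2 in Hclose. unfold y. lra. }
  assert (Hy : 0 <= y) by lra.
  assert (Hgs2 : g s ^ 2 <= y ^ 2) by (apply pow_incr; lra).
  assert (Hx2 : x ^ 2 <= (y + eps / 2) ^ 2).
  { pose proof (Rle_abs K). pose proof (Rabs_pos K). nra. }
  destruct (Rle_or_lt x (y + eps / 2)) as [Hle | Hlt]; [unfold y in Hle; lra | nra].
Qed.

Theorem mainTheorem4 (n : nat) (A B : Mat) (gamma : R -> R)
  (hA : hermitian n A) (hB : hermitian n B)
  (hmono : nondecreasing_on_nonneg gamma)
  (hcont : continuous_on_nonneg gamma)
  (hbound : forall t, 0 <= t ->
     forall E F : Mat,
       is_expm n (mscal (0, - t) A) E ->
       is_expm n (mscal (0, - t) B) F ->
       forall r, is_opnorm n (msub E F) r -> r <= t * gamma t) :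
  forall t, 0 <= t ->
    forall r, is_opnorm n (msub A B) r -> r <= gamma t.
Proof.
  intros t Ht r Hr. apply (proj2 Hr). intros x [v [Hv ->]].
  destruct (small_time_estimate n A B gamma hbound v Hv) as [K [s0 [Hs0 Hest]]].
  apply Rle_trans with (gamma 0); [| apply hmono; lra].
  apply (le_at_0_of_sq_le gamma _ K s0 hcont Hs0).
  intros s Hs. rewrite vnorm_sq. apply Hest, Hs.
Qed.
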